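(* Let $\mathcal{X}$ be a finite set with $|\mathcal{X}|=r\geq 2$, let $P_X$ be a probability mass function on $\mathcal{X}$ with $P_X(x)>0$ for all $x$, let $f:\mathcal{X}\to\mathcal{Z}=\{0,1\}$ be a given mapping, and fix an integer $l$ with $1\leq l<r$. Then for every $0\leq\rho\leq 1$, the list $\rho$-privacy satisfies $$\pi^{(l)}(\rho)=\pi_u^{(l)}(\rho)=1-\Big[P_X(\Lambda_\rho)+\rho\sum_{i\in\{0,1\}}P_X\big([f^{-1}(i)\setminus\Lambda_\rho]_{l-|\Lambda_\rho|}\big)\Big],$$ and this value is achieved by an add-noise $\rho$-QR.
   Context: Notation: $f^{-1}(i)=\{x\in\mathcal{X}: f(x)=i\}$. For $A\subseteq\mathcal{X}$ and $0\leq t\leq|A|$, $[A]_t$ denotes a set of $t$ largest $P_X$-probability elements of $A$ (ties broken arbitrarily), with $[A]_0=\emptyset$. For a set $S$, $P_X(S)=\sum_{x\in S}P_X(x)$. A $\rho$-QR ($0\leq\rho\leq1$) is a stochastic matrix $W:\mathcal{X}\to\mathcal{Z}$ with $W(f(x)|x)\geq\rho$ for all $x\in\mathcal{X}$; equivalently a $\mathcal{Z}$-valued random variable $F(X)$ with $P(F(X)=i\mid X=x)=W(i|x)$, $X\sim P_X$. With $\mathcal{L}_l$ the set of $l$-element subsets of $\mathcal{X}$, the list privacy of $W$ is $\pi^{(l)}_\rho(W)=\min_{g:\mathcal{Z}\to\mathcal{L}_l}P(X\notin g(F(X)))=1-\sum_{i\in\mathcal{Z}}\max_{L\in\mathcal{L}_l}\sum_{x\in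 L}P_X(x)W(i|x)$, and list $\rho$-privacy is $\pi^{(l)}(\rho)=\max\{\pi^{(l)}_\rho(W): W\text{ a }\rho\text{-QR}\}$. $\pi_u^{(l)}(\rho)$ is defined as $1-\big[P_X(\Lambda_\rho)+\rho\sum_{i\in\mathcal{Z}}P_X([f^{-1}(i)\setminus\Lambda_\rho]_{\min\{l-|\Lambda_\rho|,|f^{-1}(i)\setminus\Lambda_\rho|\}})\big]$, where $\Lambda_\rho$ denotes a maximizer (not necessarily unique) over subsets $\Lambda\subset\mathcal{X}$ with $0\leq|\Lambda|\leq l$ of $P_X(\Lambda)+\rho\sum_{i\in\mathcal{Z}}P_X\big([f^{-1}(i)\setminus\Lambda]_{\min\{l-|\Lambda|,\,|f^{-1}(i)\setminus\Lambda|\}}\big)$. An add-noise $\rho$-QR is a $\rho$-QR of the form $F(X)=f(X)+N \bmod k$ (here $k=|\mathcal{Z}|=2$), where $N$ is a $\mathcal{Z}$-valued random variable such that $N - f(X) - X$ is a Markov chain; equivalently, its stochastic matrix $W$ has identical rows $W(\cdot|x)$ for all $x$ in the same set $f^{-1}(i)$, $i\in\mathcal{Z}$. *)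

From HB Require Import structures.
From mathcomp Require Import all_boot all_order all_algebra.
From mathcomp Require Import reals.
Set Implicit Arguments. Unset Strict Implicit. Unset Printing Implicit Defensive.
Import Order.TTheory GRing.Theory Num.Theory.
Local Open Scope ring_scope.

Section Defs.
Variables (R : realType) (X : finType).

Definition PX (P : X -> R) (S : {set X}) : R := \sum_(x in S) P x.

(* P_X([A]_t): mass of a set of t largest-probability elements of A.
   For t <= |A| this equals the maximal mass of a t-subset of A (all masses
   are nonnegative, so the iterated max with initial value 0 is the max).
   For t > |A| we take [A]_t = A (i.e. t is capped at |A|), which is the
   min{.,.} convention of the paper. *)
Definition topmass (P : X -> R) (A : {set X}) (t : nat) : R :=
  \big[Num.max/0]_(S : {set X} | (S \subset A) && (#|S| == minn t #|A|)) PX P S.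

Definition fpre (f : X -> bool) (i : bool) : {set X} := [set x | f x == i].

Definition Gobj (P : X -> R) (f : X -> bool) (l : nat) (rho : R)
    (Lam : {set X}) : R :=
  PX P Lam + rho * \sum_(i : bool) topmass P (fpre f i :\: Lam) (l - #|Lam|).

Definition is_Lambda_rho (P : X -> R) (f : X -> bool) (l : nat) (rho : R)
    (Lam : {set X}) : Prop :=
  (#|Lam| <= l)%N /\
  forall Lam' : {set X}, (#|Lam'| <= l)%N -> Gobj P f l rho Lam' <= Gobj P f l rho Lam.

(* A stochastic matrix W : X -> Z, with Z = {0,1} = bool; W x i = W(i|x). *)
Definition stochastic (W : X -> bool -> R) : Prop :=
  (forall x i, 0 <= W x i) /\ (forall x, \sum_(i : bool) W x i = 1).

Definition is_QR (f : X -> bool) (rho : R) (W : X -> bool -> R) : Prop :=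
  stochastic W /\ forall x, rho <= W x (f x).

Definition is_addnoise_QR (f : X -> bool) (rho : R) (W : X -> bool -> R) : Prop :=
  is_QR f rho W /\ forall x y, f x = f y -> W x = W y.

Definition list_privacy (P : X -> R) (l : nat) (W : X -> bool -> R) : R :=
  1 - \sum_(i : bool)
        \big[Num.max/0]_(L : {set X} | #|L| == l) \sum_(x in L) P x * W x i.

End Defs.

From HB Require Import structures.
From mathcomp Require Import all_boot all_order all_algebra.
From mathcomp Require Import reals.
From mathcomp Require Import lra zify.
Import Order.TTheory GRing.Theory Num.Theory.
Local Open Scope ring_scope.
Set Implicit Arguments. Unset Strict Implicit. Unset Printing Implicit Defensive.

(* Write G(Lam) for the objective [Gobj].  For any rho-QR [W] and any [Lam] with
   |Lam| <= l, answering output [i] with the list Lam u [f^-1(i) \ Lam]_(l - |Lam|)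
   succeeds with probability at least G(Lam): on Lam the two outputs together carry
   P_X(Lam) since W(0|x) + W(1|x) = 1, and every other listed x has f x = i, hence
   weight W(i|x) >= rho.  So the privacy never exceeds 1 - G(Lambda_rho).

   Conversely, for rho <= 1/2 the uniform QR lets a list L succeed with probability
   P_X(L)/2 <= G(L)/2 on each output.  For rho > 1/2 take W(i|x) = rho if i = f x and
   1 - rho otherwise, and let (L_0, L_1) be optimal lists.  Call x misplaced if it
   lies in L_(~~ f x) only.  A misplaced b either joins L_(f b) if that list has room,
   or else L_(f b), being at least as large as L_(~~ f b), contains some z outside
   L_(~~ f b); then the lighter of b, z is replaced by the heavier in one list, which
   loses nothing as 1 - rho <= rho.  Once nothing is misplaced, L_i = Lam u T_i with
   Lam = L_0 n L_1 and T_i a subset of f^-1(i), so the success is at most G(Lam). *)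

Lemma extend_subset_card (T : finType) (S A : {set T}) (k : nat) :
  S \subset A -> (#|S| <= k <= #|A|)%N ->
  exists S' : {set T}, [/\ S \subset S', S' \subset A & #|S'| = k].
Proof.
move=> SA; elim: k => [|k IHk] /andP[Sk kA].
  by exists S; split=> //; apply/eqP; rewrite -leqn0.
have [Sk1 | Sk1] := eqVneq #|S| k.+1; first by exists S.
have /IHk [S' [SS' S'A S'k]] : (#|S| <= k <= #|A|)%N.
  by rewrite -ltnS ltn_neqAle Sk1 Sk ltnW.
have : (0 < #|A :\: S'|)%N by rewrite cardsDS // S'k subn_gt0.
case/card_gt0P => x; rewrite inE => /andP[xS' xA].
exists (x |: S'); split.
- exact: subset_trans SS' (subsetUr _ _).
- by rewrite subUset sub1set xA.
- by rewrite cardsU1 xS' S'k.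
Qed.

Lemma sum_le_subset (R : numDomainType) (T : finType) (g : T -> R) (A B : {set T}) :
  (forall x, 0 <= g x) -> A \subset B -> \sum_(x in A) g x <= \sum_(x in B) g x.
Proof.
move=> g_ge0 AB; rewrite [leRHS](big_setID A) /= (setIidPr AB) lerDl.
exact: sumr_ge0.
Qed.

Section TopMass.
Variables (R : realType) (X : finType) (P : X -> R).
Hypothesis P_ge0 : forall x, 0 <= P x.

Lemma PX_ge0 (S : {set X}) : 0 <= PX P S.
Proof. exact: sumr_ge0. Qed.

Lemma topmass_ge0 (A : {set X}) (t : nat) : 0 <= topmass P A t.
Proof. exact: bigmax_ge_id. Qed.

Lemma PX_le_topmass (A S : {set X}) (t : nat) :
  S \subset A -> (#|S| <= t)%N -> PX P S <= topmass P A t.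
Proof.
move=> SA St.
have [S' [SS' S'A S't]] : exists S' : {set X},
    [/\ S \subset S', S' \subset A & #|S'| = minn t #|A|].
  by apply: extend_subset_card; rewrite // leq_min St subset_leq_card // geq_minr.
apply: le_trans (sum_le_subset P_ge0 SS') _.
by apply: le_bigmax_cond; rewrite S'A S't eqxx.
Qed.

Lemma topmass_attained (A : {set X}) (t : nat) :
  exists S : {set X}, [/\ S \subset A, #|S| = minn t #|A| & topmass P A t = PX P S].
Proof.
have [S0 [_ S0A S0t]] : exists S0 : {set X},
    [/\ set0 \subset S0, S0 \subset A & #|S0| = minn t #|A|].
  by apply: extend_subset_card; rewrite ?sub0set // cards0 geq_minr.
pose admissible (S : {set X}) := (S \subset A) && (#|S| == minn t #|A|).
have S0P : admissible S0 by rewrite /admissible S0A S0t eqxx.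
have [S /andP[SA /eqP St] SP] :=
  @eq_bigmax _ _ _ 0 _ admissible (PX P) S0P (fun S _ => PX_ge0 S).
by exists S.
Qed.

End TopMass.

Definition list_mass (R : realType) (X : finType) (P : X -> R)
    (W : X -> bool -> R) (i : bool) (L : {set X}) : R :=
  \sum_(x in L) P x * W x i.

Definition max_list_mass (R : realType) (X : finType) (P : X -> R) (l : nat)
    (W : X -> bool -> R) (i : bool) : R :=
  \big[Num.max/0]_(L : {set X} | #|L| == l) list_mass P W i L.

Lemma list_privacyE (R : realType) (X : finType) (P : X -> R) (l : nat)
    (W : X -> bool -> R) :
  list_privacy P l W = 1 - \sum_i max_list_mass P l W i.
Proof. by []. Qed.

Section ListMass.
Variables (R : realType) (X : finType) (P : X -> R) (l : nat) (W : X -> bool -> R).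
Hypotheses (P_ge0 : forall x, 0 <= P x) (W_ge0 : forall x i, 0 <= W x i).
Hypothesis l_le_X : (l <= #|X|)%N.

Lemma list_mass_ge0 i L : 0 <= list_mass P W i L.
Proof. by apply: sumr_ge0 => x _; rewrite mulr_ge0. Qed.

Lemma list_mass_le_subset i (L L' : {set X}) :
  L \subset L' -> list_mass P W i L <= list_mass P W i L'.
Proof. by apply: sum_le_subset => x; rewrite mulr_ge0. Qed.

Lemma list_mass_le_max i (L : {set X}) :
  (#|L| <= l)%N -> list_mass P W i L <= max_list_mass P l W i.
Proof.
move=> Ll.
have [L' [LL' _ L'l]] : exists L' : {set X},
    [/\ L \subset L', L' \subset setT & #|L'| = l].
  by apply: extend_subset_card; rewrite ?subsetT // Ll cardsT.
apply: le_trans (list_mass_le_subset i LL') _.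
by apply: le_bigmax_cond; rewrite L'l.
Qed.

Lemma max_list_mass_attained i :
  exists2 L : {set X}, #|L| = l & max_list_mass P l W i = list_mass P W i L.
Proof.
have [L0 [_ _ L0l]] : exists L0 : {set X},
    [/\ set0 \subset L0, L0 \subset setT & #|L0| = l].
  by apply: extend_subset_card; rewrite ?sub0set // cards0 cardsT.
have L0P : #|L0| == l by rewrite L0l.
have [L /eqP Ll LP] := @eq_bigmax _ _ _ 0 _ (fun L : {set X} => #|L| == l)
  (list_mass P W i) L0P (fun L _ => list_mass_ge0 i L).
by exists L.
Qed.

End ListMass.

Lemma sum_list_mass_stochastic (R : realType) (X : finType) (P : X -> R)
    (W : X -> bool -> R) (S : {set X}) :
  (forall x, \sum_i W x i = 1) -> \sum_i list_mass P W i S = PX P S.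
Proof.
move=> W_sum1; rewrite /list_mass -exchange_big /=; apply: eq_bigr => x _.
by rewrite -mulr_sumr W_sum1 mulr1.
Qed.

Lemma Gobj_le_sum_max_list_mass (R : realType) (X : finType) (P : X -> R)
    (f : X -> bool) (l : nat) (rho : R) (W : X -> bool -> R) (Lam : {set X}) :
  (forall x, 0 <= P x) -> is_QR f rho W -> (#|Lam| <= l <= #|X|)%N ->
  Gobj P f l rho Lam <= \sum_i max_list_mass P l W i.
Proof.
move=> P_ge0 [[W_ge0 W_sum1] W_rho] /andP[Lam_l l_X].
have guess_le i :
    list_mass P W i Lam + rho * topmass P (fpre f i :\: Lam) (l - #|Lam|)
      <= max_list_mass P l W i.
  have [T [TA Tcard ->]] := topmass_attained P_ge0 (fpre f i :\: Lam) (l - #|Lam|).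
  have T_sub : T \subset (Lam :|: T) :\: Lam.
    apply/subsetP => x xT; have := subsetP TA x xT.
    by rewrite !inE xT orbT andbT => /andP[].
  have LamT_l : (#|Lam :|: T| <= l)%N.
    by have := cardsU Lam T; have := geq_minl (l - #|Lam|) #|fpre f i :\: Lam|; lia.
  apply: le_trans (list_mass_le_max P_ge0 W_ge0 l_X i LamT_l).
  rewrite /list_mass [leRHS](big_setID Lam) /= (setIidPr (subsetUl _ _)) lerD2l.
  apply: le_trans (sum_le_subset _ T_sub); last by move=> x; rewrite mulr_ge0.
  rewrite /PX mulr_sumr; apply: ler_sum => x xT; rewrite mulrC ler_wpM2l //.
  by have := subsetP TA x xT; rewrite !inE => /andP[_ /eqP <-].
rewrite /Gobj -(sum_list_mass_stochastic P Lam W_sum1) mulr_sumr -big_split /=.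
by apply: ler_sum => i _; exact: guess_le.
Qed.

Lemma PX_le_Gobj (R : realType) (X : finType) (P : X -> R) (f : X -> bool)
    (l : nat) (rho : R) (Lam : {set X}) :
  (forall x, 0 <= P x) -> 0 <= rho -> PX P Lam <= Gobj P f l rho Lam.
Proof.
move=> P_ge0 rho_ge0; rewrite /Gobj lerDl mulr_ge0 // sumr_ge0 // => i _.
exact: topmass_ge0.
Qed.

Lemma uniform_addnoise_QR (R : realType) (X : finType) (f : X -> bool) (rho : R) :
  rho <= 1 / 2 -> is_addnoise_QR f rho (fun _ _ => 1 / 2).
Proof.
by move=> rho_le; split=> //; split=> //; split=> [x i|x]; rewrite ?big_bool /=; lra.
Qed.

Lemma sum_max_list_mass_uniform_le (R : realType) (X : finType) (P : X -> R)
    (f : X -> bool) (l : nat) (rho : R) (Lam : {set X}) :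
  (forall x, 0 <= P x) -> 0 <= rho -> is_Lambda_rho P f l rho Lam ->
  \sum_i max_list_mass P l (fun _ _ => 1 / 2) i <= Gobj P f l rho Lam.
Proof.
move=> P_ge0 rho_ge0 [_ Lam_max].
have half_le i : max_list_mass P l (fun _ _ => 1 / 2) i <= Gobj P f l rho Lam / 2.
  apply: bigmax_le => [|L /eqP Ll].
    by rewrite divr_ge0 // (le_trans (PX_ge0 P_ge0 Lam)) // PX_le_Gobj.
  rewrite /list_mass -mulr_suml.
  have := PX_le_Gobj f l L P_ge0 rho_ge0; have := Lam_max L (eq_leq Ll).
  rewrite /PX; lra.
by rewrite big_bool /=; have := half_le true; have := half_le false; lra.
Qed.

Definition bsc (R : realType) (X : finType) (f : X -> bool) (rho : R)
    (x : X) (i : bool) : R :=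
  if f x == i then rho else 1 - rho.

Lemma sum_bsc (R : realType) (X : finType) (f : X -> bool) (rho : R) x :
  \sum_i bsc f rho x i = 1.
Proof.
by rewrite big_bool /bsc /=; case: (f x) => /=; [exact: subrKC | exact: subrK].
Qed.

Lemma bsc_addnoise_QR (R : realType) (X : finType) (f : X -> bool) (rho : R) :
  0 <= rho -> rho <= 1 -> is_addnoise_QR f rho (bsc f rho).
Proof.
move=> rho_ge0 rho_le1; split; last by move=> x y fxy; rewrite /bsc fxy.
split; last by move=> x; rewrite /bsc eqxx.
split=> [x i|x]; rewrite /bsc; first by case: ifP; lra.
exact: sum_bsc.
Qed.

Section Exchange.
Variables (R : realType) (X : finType) (P : X -> R) (f : X -> bool) (l : nat) (rho : R).
Hypotheses (P_ge0 : forall x, 0 <= P x).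
Hypotheses (half_le_rho : 1 - rho <= rho) (rho_le1 : rho <= 1).

Local Notation W := (bsc f rho).

Let rho_ge0 : 0 <= rho. Proof. by move: half_le_rho; lra. Qed.
Let one_sub_rho_ge0 : 0 <= 1 - rho. Proof. by rewrite subr_ge0. Qed.

Lemma bsc_le_rho x i : W x i <= rho.
Proof. by rewrite /bsc; case: ifP. Qed.

Lemma bsc_ge_1subr x i : 1 - rho <= W x i.
Proof. by rewrite /bsc; case: ifP. Qed.

(* [L i] is the list guessed when the QR outputs [i]. *)
Definition lists_mass (L : bool -> {set X}) : R := \sum_i list_mass P W i (L i).

Definition misplaced (L : bool -> {set X}) : {set X} :=
  [set x | (x \in L (~~ f x)) && (x \notin L (f x))].

Definition better_lists (L : bool -> {set X}) (b : X) (L' : bool -> {set X}) :=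
  [/\ forall i, (#|L' i| <= l)%N, misplaced L' \subset misplaced L :\ b
    & lists_mass L <= lists_mass L'].

Lemma lists_mass_update (L : bool -> {set X}) j S : lists_mass [eta L with j |-> S]
  = lists_mass L + (list_mass P W j S - list_mass P W j (L j)).
Proof. by rewrite /lists_mass !big_bool; case: j => /=; lra. Qed.

Lemma card_update_le (L : bool -> {set X}) j (S : {set X}) :
  (forall i, (#|L i| <= l)%N) -> (#|S| <= l)%N ->
  forall i, (#|[eta L with j |-> S] i| <= l)%N.
Proof. by move=> Ll Sl i /=; case: eqP. Qed.

Lemma misplaced_update_sub (L L' : bool -> {set X}) b j (E : {set X}) : b \in E ->
  {in E, forall x, (x \in L' j) = (x \in L' (~~ j))} ->
  {in ~: E, forall x i, (x \in L' i) = (x \in L i)} ->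
  misplaced L' \subset misplaced L :\ b.
Proof.
move=> bE sameE agree; apply/subsetP => x; rewrite !inE.
have [xE|xE] := boolP (x \in E).
  have same i : (x \in L' i) = (x \in L' (~~ i)).
    by move: (sameE x xE); case: i; case: (j) => /= ->.
  by rewrite [x \in L' (f x)]same andbN.
have -> : x != b by apply: contraNneq xE => ->.
by rewrite !agree // inE xE.
Qed.

Lemma add_to_own_list (L : bool -> {set X}) b :
  (forall i, (#|L i| <= l)%N) -> b \in misplaced L -> (#|L (f b)| < l)%N ->
  better_lists L b [eta L with f b |-> b |: L (f b)].
Proof.
move=> Ll; rewrite inE => /andP[bLn bL] room.
have nj : (~~ f b == f b) = false by case: (f b).
split.
- by apply: card_update_le; rewrite // cardsU1 bL.
- apply: (misplaced_update_sub (j := f b) (set11 b)) => [x|x].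
    by rewrite inE => /eqP ->; rewrite /= eqxx nj setU11.
  rewrite !inE => xb i /=; case: eqP => [->|_] //.
  by rewrite in_setU1 (negbTE xb).
- rewrite lists_mass_update lerDl /list_mass big_setU1 //= addrK /bsc eqxx.
  exact: mulr_ge0.
Qed.

Lemma swap_into_own_list (L : bool -> {set X}) b z :
  (forall i, (#|L i| <= l)%N) -> b \in misplaced L ->
  z \in L (f b) -> z \notin L (~~ f b) -> P z <= P b ->
  better_lists L b [eta L with f b |-> b |: (L (f b) :\ z)].
Proof.
move=> Ll; rewrite inE => /andP[bLn bL] zL zLn Pzb.
have nj : (~~ f b == f b) = false by case: (f b).
have zb : z != b by apply: contraTneq zL => ->.
have bLz : b \notin L (f b) :\ z by rewrite inE (negbTE bL) andbF.
split.
- apply: card_update_le => //.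
  by rewrite cardsU1 bLz; have := Ll (f b); rewrite (cardsD1 z) zL.
- apply: (misplaced_update_sub (j := f b) (E := [set b; z])); rewrite ?set21 //.
    move=> x; rewrite !inE => /orP[] /eqP ->; rewrite /= eqxx nj !inE ?eqxx //.
    by rewrite (negbTE zb) (negbTE zLn).
  move=> x; rewrite !inE negb_or => /andP[xb xz] i /=; case: eqP => [->|_] //.
  by rewrite !inE (negbTE xb) xz.
- rewrite lists_mass_update lerDl /list_mass big_setU1 //= (big_setD1 z zL) /=.
  have -> : W b (f b) = rho by rewrite /bsc eqxx.
  have := ler_wpM2r rho_ge0 Pzb; have := ler_wpM2l (P_ge0 z) (bsc_le_rho z (f b)).
  lra.
Qed.

Lemma swap_into_other_list (L : bool -> {set X}) b z :
  (forall i, (#|L i| <= l)%N) -> b \in misplaced L ->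
  z \in L (f b) -> z \notin L (~~ f b) -> P b <= P z ->
  better_lists L b [eta L with ~~ f b |-> z |: (L (~~ f b) :\ b)].
Proof.
move=> Ll; rewrite inE => /andP[bLn bL] zL zLn Pbz.
have jn : (f b == ~~ f b) = false by case: (f b).
have bz : b != z by apply: contraTneq zL => <-.
have zLb : z \notin L (~~ f b) :\ b by rewrite inE (negbTE zLn) andbF.
split.
- apply: card_update_le => //.
  by rewrite cardsU1 zLb; have := Ll (~~ f b); rewrite (cardsD1 b) bLn.
- apply: (misplaced_update_sub (j := f b) (E := [set b; z])); rewrite ?set21 //.
    move=> x; rewrite !inE => /orP[] /eqP ->; rewrite /= eqxx jn !inE ?eqxx //.
    by rewrite (negbTE bz) (negbTE bL).
  move=> x; rewrite !inE negb_or => /andP[xb xz] i /=; case: eqP => [->|_] //.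
  by rewrite in_setU1 (negbTE xz) !inE xb.
- rewrite lists_mass_update lerDl /list_mass big_setU1 //= (big_setD1 b bLn) /=.
  have -> : W b (~~ f b) = 1 - rho by rewrite /bsc jn.
  have := ler_wpM2r one_sub_rho_ge0 Pbz.
  have := ler_wpM2l (P_ge0 z) (bsc_ge_1subr z (~~ f b)).
  lra.
Qed.

Lemma exists_better_lists (L : bool -> {set X}) b :
  (forall i, (#|L i| <= l)%N) -> b \in misplaced L -> exists L', better_lists L b L'.
Proof.
move=> Ll bM; have := bM; rewrite inE => /andP[bLn bL].
have [room|full] := ltnP #|L (f b)| l; first by eexists; exact: add_to_own_list.
have [z zL zLn] : exists2 z, z \in L (f b) & z \notin L (~~ f b).
  apply/subsetPn/negP => sub.
  have : L (f b) \proper L (~~ f b) by apply/properP; split=> //; exists b.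
  by move/proper_card; have := Ll (~~ f b); lia.
have [Pzb|Pbz] := lerP (P z) (P b).
  by eexists; exact: (swap_into_own_list Ll bM zL zLn Pzb).
by eexists; exact: (swap_into_other_list Ll bM zL zLn (ltW Pbz)).
Qed.

Lemma lists_mass_le_Gobj_placed (L : bool -> {set X}) :
  (forall i, (#|L i| <= l)%N) -> misplaced L = set0 ->
  exists2 Lam : {set X}, (#|Lam| <= l)%N & lists_mass L <= Gobj P f l rho Lam.
Proof.
move=> Ll noM; pose Lam := L true :&: L false.
have Lam_sub i : Lam \subset L i by case: i; rewrite ?subsetIl ?subsetIr.
have T_sub i : L i :\: Lam \subset fpre f i :\: Lam.
  apply/subsetP => x; rewrite !inE => /andP[xLam xL]; rewrite xLam /=.
  have : x \notin misplaced L by rewrite noM inE.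
  rewrite inE; move: xLam xL; case: (f x); case: i => /=;
  by case: (x \in L true); case: (x \in L false).
exists Lam; first exact: leq_trans (subset_leq_card (Lam_sub true)) (Ll true).
have list_le i : list_mass P W i (L i)
    <= list_mass P W i Lam + rho * topmass P (fpre f i :\: Lam) (l - #|Lam|).
  rewrite /list_mass (big_setID Lam) /= (setIidPr (Lam_sub i)) lerD2l.
  apply: le_trans (ler_wpM2l rho_ge0 (PX_le_topmass P_ge0 (T_sub i) _)).
    rewrite /PX mulr_sumr; apply: ler_sum => x _; rewrite mulrC.
    apply: ler_wpM2r; [exact: P_ge0 | exact: bsc_le_rho].
  by rewrite cardsD (setIidPr (Lam_sub i)) leq_sub2r.
rewrite /Gobj -(sum_list_mass_stochastic P Lam (@sum_bsc _ _ f rho)).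
rewrite mulr_sumr -big_split /=.
by apply: ler_sum => i _; exact: list_le.
Qed.

Lemma lists_mass_le_Gobj (L : bool -> {set X}) :
  (forall i, (#|L i| <= l)%N) ->
  exists2 Lam : {set X}, (#|Lam| <= l)%N & lists_mass L <= Gobj P f l rho Lam.
Proof.
move: {2}#|misplaced L| (leqnn #|misplaced L|) => n.
elim: n L => [|n IHn] L Mn Ll.
  by apply: lists_mass_le_Gobj_placed => //; apply/eqP; rewrite -cards_eq0 -leqn0.
have [noM|[b bM]] := set_0Vmem (misplaced L).
  exact: lists_mass_le_Gobj_placed.
have [L' [L'l L'M massLL']] := exists_better_lists Ll bM.
have [|Lam Lam_l massL'] := IHn L' _ L'l.
  have := subset_leq_card L'M; rewrite (cardsD1 b (misplaced L)) bM in Mn; lia.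
by exists Lam; last exact: le_trans massL'.
Qed.

Lemma sum_max_list_mass_bsc_le (Lam : {set X}) :
  is_Lambda_rho P f l rho Lam -> (l <= #|X|)%N ->
  \sum_i max_list_mass P l W i <= Gobj P f l rho Lam.
Proof.
move=> [_ Lam_max] lX.
have W_ge0 x i : 0 <= W x i := le_trans one_sub_rho_ge0 (bsc_ge_1subr x i).
rewrite big_bool /=.
have [L1 L1l ->] := max_list_mass_attained P_ge0 W_ge0 lX true.
have [L0 L0l ->] := max_list_mass_attained P_ge0 W_ge0 lX false.
pose L i := if i then L1 else L0.
have [|Lam' Lam'l massL] := @lists_mass_le_Gobj L; first by case; rewrite ?L1l ?L0l.
by apply: le_trans (Lam_max _ Lam'l); rewrite /lists_mass big_bool in massL.
Qed.

End Exchange.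

Lemma exists_addnoise_QR_sum_max_list_mass_le (R : realType) (X : finType)
    (P : X -> R) (f : X -> bool) (l : nat) (rho : R) (Lam : {set X}) :
  (forall x, 0 <= P x) -> 0 <= rho -> rho <= 1 -> (l <= #|X|)%N ->
  is_Lambda_rho P f l rho Lam ->
  exists W, is_addnoise_QR f rho W /\ \sum_i max_list_mass P l W i <= Gobj P f l rho Lam.
Proof.
move=> P_ge0 rho_ge0 rho_le1 lX LamP.
have [rho_le_half|half_lt_rho] := lerP rho (1 / 2).
  exists (fun _ _ => 1 / 2); split; first exact: uniform_addnoise_QR.
  exact: sum_max_list_mass_uniform_le.
exists (bsc f rho); split; first exact: bsc_addnoise_QR.
by apply: sum_max_list_mass_bsc_le => //; lra.
Qed.

Unset Implicit Arguments.

Theorem theorem2 (R : realType) (X : finType) (P : X -> R) (f : X -> bool)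
    (l : nat) (rho : R) :
  (2 <= #|X|)%N ->
  (forall x, 0 < P x) -> \sum_(x : X) P x = 1 ->
  (1 <= l)%N -> (l < #|X|)%N ->
  0 <= rho -> rho <= 1 ->
  forall Lam : {set X}, is_Lambda_rho P f l rho Lam ->
    let v := 1 - (PX P Lam +
                  rho * \sum_(i : bool) topmass P (fpre f i :\: Lam) (l - #|Lam|)) in
    (forall W, is_QR f rho W -> list_privacy P l W <= v) /\
    (exists W, is_addnoise_QR f rho W /\ list_privacy P l W = v).
Proof.
move=> _ P_gt0 _ _ l_lt_X rho_ge0 rho_le1 Lam LamP v.
have P_ge0 x : 0 <= P x := ltW (P_gt0 x).
have l_le_X := ltnW l_lt_X.
have privacy_le W : is_QR f rho W -> list_privacy P l W <= v.
  move=> QR; rewrite list_privacyE /v lerD2l lerN2.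
  by apply: Gobj_le_sum_max_list_mass; rewrite // LamP.1.
split=> //.
have [W [W_QR massW]] :=
  exists_addnoise_QR_sum_max_list_mass_le P_ge0 rho_ge0 rho_le1 l_le_X LamP.
exists W; split=> //; apply/le_anti/andP; split; first exact: privacy_le W_QR.1.
by rewrite list_privacyE /v lerD2l lerN2.
Qed.
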